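(* In the standing setting below, let $X_i=(x_i,u_i)\in\mathbb{X}\times\mathbb{R}$ for $i=0,1$. Then for every $x\in\mathbb{X}$, $$F_{X_0X_1}(x)=\sup\Big(\bigcup_{i=0,1}\{-c(x,y)+c(x_i,y)+u_i:\ y\in\mathbb{Y},\ -c(x_{i+1},y)+c(x_i,y)+u_i\le u_{i+1}\}\Big),$$ where indices are taken modulo 2 (so $x_{1+1}=x_0$, $u_{1+1}=u_0$).
   Context: Standing setting: $\mathbb{X},\mathbb{Y}\subset\mathbb{R}^n$ are compact with non-empty interior; $c:\mathbb{X}\times\mathbb{Y}\to\mathbb{R}$ has continuous $D_xc$, $D_yc$, and continuous mixed second derivatives with $D^2_{xy}c=(D^2_{yx}c)^T$; for each $x$ the map $y\mapsto -D_xc(x,y)$ is injective on $\mathbb{Y}$ and for each $y$ the map $x\mapsto -D_yc(x,y)$ is injective on $\mathbb{X}$; $D^2_{xy}c(x,y)$ is invertible everywhere; for every $y$ the set $\{-D_yc(x,y):x\in\mathbb{X}\}$ is convex and for every $x$ the set $\{-D_xc(x,y):y\in\mathbb{Y}\}$ is convex. $c$-chord: for $X_i=(x_i,u_i)\in\mathbb{X}\times\mathbb{R}$, $F_{X_0X_1}(x)=\sup\{-c(x,y)+h: y\in\mathbb{Y},h\in\mathbb{R},-c(x_i,y)+h\le u_i, i=0,1\}$. *)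

(* R^n is modelled as row vectors 'rV[R]_n. *)
From HB Require Import structures.
From mathcomp Require Import all_boot all_order all_algebra.
From mathcomp Require Import all_classical all_reals all_analysis.
Set Implicit Arguments.
Unset Strict Implicit.
Unset Printing Implicit Defensive.
Import Order.TTheory GRing.Theory Num.Theory.
Import numFieldNormedType.Exports.
Local Open Scope classical_set_scope.
Local Open Scope ring_scope.

Section Defs.
Variables (R : realType) (n : nat).
Implicit Types (c : 'rV[R]_n -> 'rV[R]_n -> R) (x y : 'rV[R]_n).

Definition ebasis (i : 'I_n) : 'rV[R]_n := delta_mx 0 i.

Definition gradx c x y : 'rV[R]_n :=
  \row_i 'D_(ebasis i) (fun x' => c x' y) x.
Definition grady c x y : 'rV[R]_n :=
  \row_j 'D_(ebasis j) (fun y' => c x y') y.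

Definition Dxy c x y : 'M[R]_n :=
  \matrix_(i, j) 'D_(ebasis j) (fun y' => 'D_(ebasis i) (fun x' => c x' y') x) y.
Definition Dyx c x y : 'M[R]_n :=
  \matrix_(j, i) 'D_(ebasis i) (fun x' => 'D_(ebasis j) (fun y' => c x' y') y) x.

Definition convex_set_rV (S : set 'rV[R]_n) : Prop :=
  forall a b, S a -> S b -> forall t : R, 0 <= t <= 1 ->
    S (t *: a + (1 - t) *: b).

Definition standing_setting (X Y : set 'rV[R]_n) c : Prop :=
     compact X /\ compact Y /\ interior X !=set0 /\ interior Y !=set0 /\
   (forall x y, X x -> Y y ->
      differentiable (fun x' => c x' y) x /\ differentiable (fun y' => c x y') y) /\
   {within X `*` Y, continuous (fun p => gradx c p.1 p.2)} /\
   {within X `*` Y, continuous (fun p => grady c p.1 p.2)} /\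
   (forall x y, X x -> Y y -> forall i j : 'I_n,
      derivable (fun y' => 'D_(ebasis i) (fun x' => c x' y') x) y (ebasis j) /\
      derivable (fun x' => 'D_(ebasis j) (fun y' => c x' y') y) x (ebasis i)) /\
   {within X `*` Y, continuous (fun p => Dxy c p.1 p.2)} /\
   {within X `*` Y, continuous (fun p => Dyx c p.1 p.2)} /\
   (forall x y, X x -> Y y -> Dxy c x y = (Dyx c x y)^T) /\
   (forall x, X x -> {in Y &, injective (fun y => - gradx c x y)}) /\
   (forall y, Y y -> {in X &, injective (fun x => - grady c x y)}) /\
   (forall x y, X x -> Y y -> Dxy c x y \in unitmx) /\
   (forall y, Y y -> convex_set_rV [set - grady c x y | x in X]) /\
   (forall x, X x -> convex_set_rV [set - gradx c x y | y in Y]).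

Definition cchord (Y : set 'rV[R]_n) c (x0 : 'rV[R]_n) (u0 : R)
    (x1 : 'rV[R]_n) (u1 : R) (x : 'rV[R]_n) : \bar R :=
  ereal_sup [set r : \bar R | exists (y : 'rV[R]_n) (h : R),
     [/\ Y y, - c x0 y + h <= u0, - c x1 y + h <= u1 & r = (- c x y + h)%:E]].
End Defs.

From HB Require Import structures.
From mathcomp Require Import all_boot all_order all_algebra.
From mathcomp Require Import all_classical all_reals all_analysis.
From mathcomp Require Import lra.
Import Order.TTheory GRing.Theory Num.Theory.
Import numFieldNormedType.Exports.
Local Open Scope classical_set_scope.
Local Open Scope ring_scope.

(** For fixed [y] the admissible heights [h] are exactly those below
    [min (c x0 y + u0) (c x1 y + u1)], so the supremum over [h] is attained at
    that minimum; splitting according to which term realises the minimum gives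
    the two families of the statement.  No property of [c], [X] or [Y] is
    needed. *)

Section SupUnderMin.
Variables (R : realType) (T : Type) (Y : set T) (f a b : T -> R).

Lemma ereal_sup_below_min :
  ereal_sup [set r | exists y h, [/\ Y y, h <= a y, h <= b y & r = (f y + h)%:E]]
  = ereal_sup [set (f y + Num.min (a y) (b y))%:E | y in Y].
Proof.
apply/eqP; rewrite eq_le; apply/andP; split.
- apply: ge_ereal_sup => _ [y [h [Yy ha hb ->]]].
  apply: (@le_trans _ _ (f y + Num.min (a y) (b y))%:E).
    by rewrite lee_fin lerD2l le_min ha hb.
  by apply: ereal_sup_ubound; exists y.
- apply: ge_ereal_sup => _ [y Yy <-]; apply: ereal_sup_ubound.
  by exists y, (Num.min (a y) (b y)); rewrite !ge_min !lexx ?orbT.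
Qed.

Lemma image_addr_min :
  [set (f y + Num.min (a y) (b y))%:E | y in Y]
  = [set (f y + a y)%:E | y in [set y | Y y /\ a y <= b y]] `|`
    [set (f y + b y)%:E | y in [set y | Y y /\ b y <= a y]].
Proof.
apply/seteqP; split => [_ [y Yy <-]|_ [] [y [Yy le_ab] <-]].
- have [le_ab|/ltW le_ba] := leP (a y) (b y).
  + by left; exists y; rewrite ?min_l.
  + by right; exists y; rewrite ?min_r.
- by exists y; rewrite ?min_l.
- by exists y; rewrite ?min_r.
Qed.

End SupUnderMin.

Theorem lemma3p3 (R : realType) (n : nat) (X Y : set 'rV[R]_n)
    (c : 'rV[R]_n -> 'rV[R]_n -> R)
    (x0 x1 : 'rV[R]_n) (u0 u1 : R) :
  standing_setting X Y c -> X x0 -> X x1 ->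
  forall x, X x ->
  cchord Y c x0 u0 x1 u1 x =
  ereal_sup ([set ((- c x y + c x0 y + u0)%R)%:E | y in
                [set y | Y y /\ - c x1 y + c x0 y + u0 <= u1]] `|`
             [set ((- c x y + c x1 y + u1)%R)%:E | y in
                [set y | Y y /\ - c x0 y + c x1 y + u1 <= u0]]).
Proof.
move=> _ _ _ x _; rewrite /cchord.
pose a y := c x0 y + u0; pose b y := c x1 y + u1.
transitivity (ereal_sup [set (- c x y + Num.min (a y) (b y))%:E | y in Y]).
  rewrite -ereal_sup_below_min; congr ereal_sup; apply/seteqP.
  by split => _ [y [h [Yy ha hb ->]]]; exists y, h; move: ha hb;
    rewrite /a /b => ha hb; split => //; lra.
rewrite image_addr_min; congr (ereal_sup (_ `|` _)); apply/seteqP;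
  by split => _ [y [Yy le] <-]; exists y; rewrite /a /b ?addrA //;
    split => //; move: le; rewrite /a /b; lra.
Qed.
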